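(* Let $n$ be a positive integer such that $2^n-1\geq 7$ is a prime. Then for every $a\in\mathbb{F}_2$ there exists a primitive element $\alpha\in\mathbb{F}_{2^n}$ such that $\alpha+\alpha^{-1}$ is also primitive and $\mathrm{Tr}_{\mathbb{F}_{2^n}|\mathbb{F}_2}(\alpha)=a$.
   Context: A primitive element of $\mathbb{F}_{2^n}$ is a generator of $\mathbb{F}_{2^n}^*$. $\mathrm{Tr}_{\mathbb{F}_{2^n}|\mathbb{F}_2}(\alpha)=\alpha+\alpha^2+\cdots+\alpha^{2^{n-1}}$. *)

From mathcomp Require Import all_boot all_order all_algebra all_field.
Set Implicit Arguments. Unset Strict Implicit. Unset Printing Implicit Defensive.
Import GRing.Theory.
Local Open Scope ring_scope.

Definition primitive_elt (F : finFieldType) (x : F) : Prop :=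
  x != 0 /\ forall y : F, y != 0 -> exists k : nat, y = x ^+ k.

Definition trace2 (F : finFieldType) (n : nat) (x : F) : F :=
  \sum_(i < n) x ^+ (2 ^ i).

From mathcomp Require Import all_boot all_order all_algebra all_field.
From mathcomp Require Import ring zify.
Set Implicit Arguments. Unset Strict Implicit. Unset Printing Implicit Defensive.
Import GRing.Theory.
Local Open Scope ring_scope.

(* Since #|F^*| = 2^n - 1 is prime, every element other than 0 and 1 is
   primitive.  So it suffices to find x outside {0, 1} with trace a and with
   x + x^-1 outside {0, 1}.  In characteristic 2, x + x^-1 = 0 forces x^2 = 1
   and x + x^-1 = 1 forces x^3 = 1, neither of which can hold for an element
   of prime order 2^n - 1 >= 7.  Finally the trace is F_2-valued and each of
   its two fibres is the root set of a polynomial of degree 2^(n-1), so both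
   fibres have exactly 2^(n-1) >= 4 elements. *)

Lemma idemf_eq01 (R : idomainType) (x : R) : x ^+ 2 = x -> x = 0 \/ x = 1.
Proof.
move=> xx; have /eqP : x * (x - 1) = 0 by rewrite mulrBr mulr1 -expr2 xx subrr.
by rewrite mulf_eq0 subr_eq0 => /orP[/eqP|/eqP]; [left | right].
Qed.

Lemma addfV_eq0 (F : fieldType) (x : F) :
  x != 0 -> x + x^-1 = 0 -> x ^+ 2 = -1.
Proof.
move=> x0 /(congr1 ( *%R x)); rewrite mulrDr mulfV // mulr0 expr2 => e.
by apply/eqP; rewrite -subr_eq0 opprK e.
Qed.

Lemma addfV_eq1 (F : fieldType) (x : F) :
  x != 0 -> x + x^-1 = 1 -> x ^+ 3 = -1.
Proof.
move=> x0 /(congr1 ( *%R x)); rewrite mulrDr mulfV // mulr1 => e.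
apply/eqP; rewrite -subr_eq0 opprK.
have -> : x ^+ 3 + 1 = (x * x + 1 - x) * (x + 1) by ring.
by rewrite e subrr mul0r.
Qed.

Lemma card_gt2_notin_set2 (T : finType) (A : {set T}) (a b : T) :
  (2 < #|A|)%N -> exists2 x, x \in A & x \notin [set a; b].
Proof.
move=> A_gt2; apply/subsetPn; apply: contraTN A_gt2 => /subset_leq_card.
by rewrite -leqNgt cards2 => /leq_trans; apply; case: (a != b).
Qed.

Section PrimeOrderUnits.
Variable F : finFieldType.

Lemma expf_card_pred (x : F) : x != 0 -> x ^+ #|F|.-1 = 1.
Proof.
move=> x0; apply: (mulIf x0); rewrite mul1r -exprSr prednK ?expf_card //.
by apply/card_gt0P; exists x.
Qed.

Lemma primitive_root_primitive_elt (x : F) :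
  #|F|.-1.-primitive_root x -> primitive_elt x.
Proof.
move=> prx; split=> [|y y0].
  apply: contra_eq_neq (prim_expr_order prx) => ->.
  by rewrite expr0n gtn_eqF ?(prim_order_gt0 prx) // eq_sym oner_eq0.
by have [i ->] := prim_rootP prx (expf_card_pred y0); exists i.
Qed.

Hypothesis prime_units : prime #|F|.-1.

Lemma prime_units_primitive_root (x : F) :
  x != 0 -> x != 1 -> #|F|.-1.-primitive_root x.
Proof.
move=> x0 x1; have [d prx] := prim_order_exists (prime_gt0 prime_units) (expf_card_pred x0).
case/primeP: prime_units => _ /[apply] /orP[/eqP d1|/eqP <-] //.
by move: (prim_expr_order prx); rewrite d1 expr1 => x_eq1; rewrite x_eq1 eqxx in x1.
Qed.

Lemma prime_units_primitive_elt (x : F) : x != 0 -> x != 1 -> primitive_elt x.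
Proof. by move=> x0 x1; apply/primitive_root_primitive_elt/prime_units_primitive_root. Qed.

Lemma prime_units_expf_neq1 (x : F) (k : nat) :
  x != 0 -> x != 1 -> (0 < k < #|F|.-1)%N -> x ^+ k != 1.
Proof.
move=> x0 x1 /andP[k_gt0 k_lt].
rewrite -(prim_order_dvd (prime_units_primitive_root x0 x1)).
by apply: contraTN k_lt => /(dvdn_leq k_gt0); rewrite -leqNgt.
Qed.

End PrimeOrderUnits.

Section Trace.
Variables (F : finFieldType) (m : nat).

Lemma card_trace2_fiber_le (c : F) :
  (#|[set x : F | trace2 m.+1 x == c]| <= 2 ^ m)%N.
Proof.
pose P : {poly F} := \sum_(i < m.+1) 'X^(2 ^ i) - c%:P.
have P_eval x : P.[x] = trace2 m.+1 x - c.
  by rewrite hornerD hornerN hornerC horner_sum; under eq_bigr do rewrite hornerXn.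
have sizeP : size P = (2 ^ m).+1.
  rewrite /P big_ord_recr /= addrAC addrC size_polyDl size_polyXn // ltnS.
  apply: leq_trans (size_polyD _ _) _; rewrite geq_max size_polyN.
  rewrite (leq_trans (size_polyC_leq1 c)) ?expn_gt0 // andbT.
  apply: leq_trans (size_sum _ _ _) _; apply/bigmax_leqP => i _.
  by rewrite size_polyXn ltn_exp2l.
have P_neq0 : P != 0 by rewrite -size_poly_eq0 sizeP.
rewrite cardE -ltnS -sizeP; apply: max_poly_roots P_neq0 _ (enum_uniq _).
by apply/allP => x; rewrite mem_enum inE /root P_eval subr_eq0.
Qed.

Hypothesis cardF : #|F| = (2 ^ m.+1)%N.

Let pchar2F : 2 \in [pchar F] := card_finPcharP cardF isT.

Lemma trace2_sqr (x : F) : trace2 m.+1 x ^+ 2 = trace2 m.+1 x.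
Proof.
rewrite /trace2 -(pFrobenius_autE pchar2F) rmorph_sum /=.
under eq_bigr do rewrite pFrobenius_autE -exprM -expnSr.
by rewrite big_ord_recr /= -cardF expf_card [RHS]big_ord_recl /= addrC.
Qed.

Lemma card_trace2_fiber (b : bool) :
  #|[set x : F | trace2 m.+1 x == b%:R]| = (2 ^ m)%N.
Proof.
pose S (b : bool) := [set x : F | trace2 m.+1 x == b%:R].
have cover : [set: F] \subset S false :|: S true.
  apply/subsetP => x _; rewrite !inE /=.
  by case: (idemf_eq01 (trace2_sqr x)) => ->; rewrite eqxx ?orbT.
have := leq_trans (subset_leq_card cover) (leq_card_setU _ _).
have := card_trace2_fiber_le false%:R; have := card_trace2_fiber_le true%:R.
rewrite cardsT cardF expnS -/(S false) -/(S true) -/(S b).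
by case: b; lia.
Qed.

End Trace.

Theorem lemma6p1 (n : nat) (F : finFieldType) (hF : #|F| = (2 ^ n)%N)
  (hn : (0 < n)%N) (hp : prime (2 ^ n - 1)) (h7 : (7 <= 2 ^ n - 1)%N) :
  forall a : bool, exists alpha : F,
    [/\ primitive_elt alpha, primitive_elt (alpha + alpha^-1)
      & trace2 n alpha = (nat_of_bool a)%:R].
Proof.
move=> a; case: n hn hF hp h7 => // m _ hF hp h7.
rewrite subn1 -hF in hp h7.
have pchar2F : 2 \in [pchar F] := card_finPcharP hF isT.
have [x] : exists2 x, x \in [set x : F | trace2 m.+1 x == a%:R] & x \notin [set 0; 1].
  by apply: card_gt2_notin_set2; rewrite card_trace2_fiber //; move: h7; rewrite hF expnS; lia.
rewrite !inE negb_or => /eqP tx /andP[x0 x1].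
have expf_neq1 k : (0 < k < 4)%N -> x ^+ k != 1.
  by move=> /andP[k0 k4]; apply: prime_units_expf_neq1; rewrite // k0; lia.
exists x; split=> //; first exact: prime_units_primitive_elt.
apply: prime_units_primitive_elt => //.
  apply: contra (expf_neq1 2%N erefl) => /eqP /(addfV_eq0 x0) ->.
  by rewrite oppr_pchar2.
apply: contra (expf_neq1 3%N erefl) => /eqP /(addfV_eq1 x0) ->.
by rewrite oppr_pchar2.
Qed.
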